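(* Let $A \in \mathbb{R}^{m \times n_A}$ and $B \in \mathbb{R}^{m \times n_B}$ with nonzero columns, let $OPT$ be a set of $k$ columns of $B$ maximizing $f_A$ among all $k$-sets of columns of $B$, with $\sigma_{\min}(OPT) > 0$. Let $T_1, \dots, T_\ell$ be any partition of the columns of $B$, let $k' = \frac{32k}{\sigma_{\min}(OPT)}$, let $S_i = \textsc{Greedy}(A, T_i, k')$, and let $$OPT_i^{NS} = \{x \in OPT : x \notin \textsc{Greedy}(A, T_i \cup \{x\}, k')\}.$$ Then $f_A(S_i) \ge \frac{f_A(OPT_i^{NS})}{2}$ for all $i$.
   Context: For a finite set $V$ of vectors in $\mathbb{R}^m$, $\Pi_V$ is the orthogonal projector onto $\mathrm{span}(V)$ and, for a matrix $M$ with $m$ rows, $f_M(V) = \|\Pi_V M\|_F^2$. For a finite set $V$ of nonzero vectors, $\sigma_{\min}(V)$ is the smallest squared singular value of the matrix whose columns are the vectors of $V$ rescaled to unit length. $\textsc{Greedy}(A, C, r)$ (for a set of columns $C$): start with $S = \emptyset$; for $r$ steps (or until $C$ is exhausted), add to $S$ a column $c \in C$ maximizing $f_A(S \cup \{c\})$ (ties broken by a fixed deterministic rule); return $S$. *)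

From HB Require Import structures.
From mathcomp Require Import all_boot all_order all_algebra.
Set Implicit Arguments. Unset Strict Implicit. Unset Printing Implicit Defensive.
Import Order.TTheory GRing.Theory Num.Theory.
Local Open Scope ring_scope.

Section Defs.
Variables (R : rcfType) (m nA nB : nat).

(* A square matrix whose row space is span{ b_j : j in S } (vectors as rows). *)
Definition span_mx (B : 'M[R]_(m, nB)) (S : {set 'I_nB}) : 'M[R]_m :=
  (\sum_(j in S) <<row j B^T>>)%MS.

Definition proj_mx (B : 'M[R]_(m, nB)) (S : {set 'I_nB}) : 'M[R]_m :=
  let N := row_base (span_mx B S) in N^T *m invmx (N *m N^T) *m N.

Definition frob2 p q (M : 'M[R]_(p, q)) : R := \sum_i \sum_j M i j ^+ 2.

Definition fA (A : 'M[R]_(m, nA)) (B : 'M[R]_(m, nB)) (S : {set 'I_nB}) : R :=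
  frob2 (proj_mx B S *m A).

(* Greedy(A, C, r) with ties broken by least priority pr (pr injective). *)
Definition greedy_cands A B (C S : {set 'I_nB}) : {set 'I_nB} :=
  [set c in C :\: S |
     [forall d in C :\: S, fA A B (d |: S) <= fA A B (c |: S)]].

Definition greedy_step (pr : 'I_nB -> nat) A B (C S : {set 'I_nB}) :=
  let M := greedy_cands A B C S in
  match [pick c in M | [forall d in M, (pr c <= pr d)%N]] with
  | Some c => c |: S
  | None => S
  end.

Definition greedy (pr : 'I_nB -> nat) A B (C : {set 'I_nB}) (r : nat)
  : {set 'I_nB} := iter r (greedy_step pr A B C) set0.

Definition col_norm (B : 'M[R]_(m, nB)) (j : 'I_nB) : R :=
  Num.sqrt (\sum_i B i j ^+ 2).

Definition gram_unit (B : 'M[R]_(m, nB)) (S : {set 'I_nB}) : 'M[R]_(#|S|) :=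
  \matrix_(a, b) ((\sum_i B i (enum_val a) * B i (enum_val b))
                  / (col_norm B (enum_val a) * col_norm B (enum_val b))).

(* s = sigma_min(S): the smallest squared singular value of the matrix of
   unit-normalized columns, i.e. the smallest eigenvalue of its Gram matrix. *)
Definition is_sigma_min (B : 'M[R]_(m, nB)) (S : {set 'I_nB}) (s : R) : Prop :=
  eigenvalue (gram_unit B S) s /\
  forall a, eigenvalue (gram_unit B S) a -> s <= a.

End Defs.

From Pilot Require Import Defs.
From HB Require Import structures.
From mathcomp Require Import all_boot all_order all_algebra.
From mathcomp Require Import ring lra.
From mathcomp Require Import complex.
Set Implicit Arguments. Unset Strict Implicit. Unset Printing Implicit Defensive.
Import Order.TTheory GRing.Theory Num.Theory.
Local Open Scope ring_scope.

(* Let G_j be the greedy run on T_i, O = OPT_i^NS and F = f_A(O).  For x in O,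
   greedy on T_i ∪ {x} never picks x, so it makes the same choices as greedy
   on T_i while x stays available: f_A(G_j ∪ {x}) <= f_A(G_(j+1)).  Adding x to
   G_j gains at least ||x̂ (I - Π_(G_j)) A||^2, x̂ the unit vector along x.  The unit
   columns of OPT satisfy a lower frame bound σ = σ_min(OPT) on span(O), so
   σ ||Π_O (I - Π_(G_j)) A||^2 <= |O| (f_A(G_(j+1)) - f_A(G_j)), and
   3 F <= 12 ||Π_O (I - Π_(G_j)) A||^2 + 4 f_A(G_j).  Hence while
   f_A(G_j) < F/2 each step gains at least σ F / (12 |O|), and k' >= 32 k / σ
   steps leave no room for f_A(G_(k')) < F/2. *)

Lemma sumr_supp (V : nmodType) (I : finType) (S : {pred I}) (F : I -> V) :
  (forall i, i \notin S -> F i = 0) -> \sum_i F i = \sum_(i in S) F i.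
Proof.
by move=> F0; rewrite [RHS]big_mkcond; apply: eq_bigr => i _; case: ifPn => // /F0.
Qed.

Lemma cauchy_schwarz (R : realDomainType) (I : finType) (a b : I -> R) :
  (\sum_i a i * b i) ^+ 2 <= (\sum_i a i ^+ 2) * (\sum_i b i ^+ 2).
Proof.
set al := \sum_i a i ^+ 2; set be := \sum_i a i * b i; set ga := \sum_i b i ^+ 2.
have al_ge0 : 0 <= al by apply: sumr_ge0 => i _; rewrite sqr_ge0.
have sum_sq : \sum_i (al * b i - be * a i) ^+ 2 = al * (al * ga - be ^+ 2).
  rewrite (eq_bigr (fun i => al ^+ 2 * b i ^+ 2 - (2 * al * be) * (a i * b i)
                            + be ^+ 2 * a i ^+ 2)) => [|i _]; last by ring.
  rewrite big_split sumrB /= -!mulr_sumr -/al -/be -/ga; ring.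
have : 0 <= al * (al * ga - be ^+ 2).
  by rewrite -sum_sq; apply: sumr_ge0 => i _; rewrite sqr_ge0.
have [al_gt0 | al_le0] := ltrP 0 al.
  by rewrite (pmulr_rge0 _ al_gt0) subr_ge0.
have a0 i : a i = 0.
  apply/eqP; rewrite -sqrf_eq0; move: al_le0; rewrite le_eqVlt ltNge al_ge0 orbF.
  by rewrite psumr_eq0 => [/allP/(_ i (mem_index_enum _))|j _]; rewrite ?sqr_ge0.
move=> _; rewrite /be big1 => [|i _]; last by rewrite a0 mul0r.
by rewrite expr2 mul0r mulr_ge0 // sumr_ge0 // => i _; rewrite sqr_ge0.
Qed.

Lemma mul_mx_tr_eq0 (R : realDomainType) p q (X : 'M[R]_(p, q)) :
  X *m X^T = 0 -> X = 0.
Proof.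
move=> /matrixP XXt0; apply/matrixP => i j; rewrite mxE.
have /eqP := XXt0 i i; rewrite !mxE psumr_eq0 => [|k _]; last first.
  by rewrite mxE -expr2 sqr_ge0.
by move=> /allP /(_ j (mem_index_enum _)); rewrite mxE -expr2 sqrf_eq0 => /eqP.
Qed.

Lemma row_free_mul_tr_unit (R : realFieldType) p q (N : 'M[R]_(p, q)) :
  row_free N -> N *m N^T \in unitmx.
Proof.
move=> N_free; rewrite -row_free_unit -kermx_eq0.
set K := kermx _.
have : (K *m N) *m (K *m N)^T = 0.
  by rewrite trmx_mul !mulmxA -(mulmxA K) mulmx_ker mul0mx.
by move/mul_mx_tr_eq0/eqP; rewrite mulmx_free_eq0.
Qed.

Section Frobenius.
Variable R : rcfType.

Lemma frob2_ge0 p q (M : 'M[R]_(p, q)) : 0 <= frob2 M.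
Proof. by apply: sumr_ge0 => i _; apply: sumr_ge0 => j _; rewrite sqr_ge0. Qed.

Lemma frob2_trmx p q (M : 'M[R]_(p, q)) : frob2 M^T = frob2 M.
Proof.
by rewrite /frob2 exchange_big; apply: eq_bigr => i _; apply: eq_bigr => j _; rewrite mxE.
Qed.

Lemma frob2E p q (M : 'M[R]_(p, q)) : frob2 M = \tr (M *m M^T).
Proof.
rewrite /frob2 /mxtrace; apply: eq_bigr => i _; rewrite mxE.
by apply: eq_bigr => j _; rewrite mxE expr2.
Qed.

Lemma frob2_rowE p (v : 'rV[R]_p) : frob2 v = (v *m v^T) 0 0.
Proof. by rewrite frob2E /mxtrace big_ord1. Qed.

Lemma frob2_rows p q (M : 'M[R]_(p, q)) : frob2 M = \sum_i frob2 (row i M).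
Proof.
by apply: eq_bigr => i _; rewrite /frob2 big_ord1; apply: eq_bigr => j _; rewrite mxE.
Qed.

Lemma frob2_row_mul_le p q (u : 'rV[R]_p) (Y : 'M[R]_(p, q)) :
  frob2 (u *m Y) <= frob2 u * frob2 Y.
Proof.
rewrite /frob2 !big_ord1 [X in _ <= _ * X]exchange_big /= mulr_sumr.
by apply: ler_sum => j _; rewrite mxE; apply: cauchy_schwarz.
Qed.

(* [3 (x + y)^2 <= 12 x^2 + 4 y^2] is [(3 x - y)^2 >= 0]. *)
Lemma frob2_add_le p q (X Y : 'M[R]_(p, q)) :
  3%:R * frob2 (X + Y) <= 12%:R * frob2 X + 4%:R * frob2 Y.
Proof.
rewrite /frob2 !mulr_sumr -big_split /=; apply: ler_sum => i _.
rewrite !mulr_sumr -big_split /=; apply: ler_sum => j _.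
by rewrite mxE; have := sqr_ge0 (3%:R * X i j - Y i j); nra.
Qed.

Section OrthogonalProjector.
Variables (n : nat) (Q : 'M[R]_n).
Hypotheses (Q_sym : Q^T = Q) (Q_idem : Q *m Q = Q).

Lemma compl_proj_sym : (1%:M - Q)^T = 1%:M - Q.
Proof. by rewrite linearB /= trmx1 Q_sym. Qed.

Lemma compl_proj_idem : (1%:M - Q) *m (1%:M - Q) = 1%:M - Q.
Proof. by rewrite mulmxBl mul1mx mulmxBr mulmx1 Q_idem subrr subr0. Qed.

Lemma frob2_projE q (Y : 'M[R]_(n, q)) : frob2 (Q *m Y) = \tr (Q *m (Y *m Y^T)).
Proof.
rewrite frob2E trmx_mul Q_sym mulmxA mxtrace_mulC !mulmxA -(mulmxA _ Q Q) Q_idem.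
by rewrite mxtrace_mulC mulmxA mxtrace_mulC mulmxA.
Qed.

End OrthogonalProjector.

Lemma frob2_proj_le n q (Q : 'M[R]_n) (Y : 'M[R]_(n, q)) :
  Q^T = Q -> Q *m Q = Q -> frob2 (Q *m Y) <= frob2 Y.
Proof.
move=> Q_sym Q_idem; have := frob2_ge0 ((1%:M - Q) *m Y).
rewrite frob2_projE ?compl_proj_sym ?compl_proj_idem //.
by rewrite mulmxBl mul1mx linearB /= -frob2E -frob2_projE // subr_ge0.
Qed.

End Frobenius.

Section Projection.
Variables (R : rcfType) (m nB : nat) (B : 'M[R]_(m, nB)).
Local Notation P := (Defs.proj_mx B).
Local Notation span := (span_mx B).
Implicit Types S : {set 'I_nB}.

Lemma proj_mx_sym S : (P S)^T = P S.
Proof.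
rewrite /Defs.proj_mx /=; move: (row_base _) => N.
by rewrite !trmx_mul trmxK trmx_inv trmx_mul trmxK mulmxA.
Qed.

Lemma proj_mx_id S p (w : 'M[R]_(p, m)) : (w <= span S)%MS -> w *m P S = w.
Proof.
move=> wS; rewrite /Defs.proj_mx /=; set N := row_base _.
have wN : (w <= N)%MS by rewrite eq_row_base.
have NP : N *m (N^T *m invmx (N *m N^T) *m N) = N.
  by rewrite !mulmxA mulmxV ?row_free_mul_tr_unit ?row_base_free // mul1mx.
by rewrite -{1}(mulmxKpV wN) -(mulmxA _ N) NP (mulmxKpV wN).
Qed.

Lemma proj_mx_sub S : (P S <= span S)%MS.
Proof. by rewrite (submx_trans (submxMl _ _)) // eq_row_base. Qed.

Lemma proj_mx_idem S : P S *m P S = P S.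
Proof. by rewrite proj_mx_id // proj_mx_sub. Qed.

Lemma span_mxS S S' : S \subset S' -> (span S <= span S')%MS.
Proof.
move=> SS'; apply/sumsmx_subP => j jS.
by apply: (sumsmx_sup j) => //; apply: (subsetP SS').
Qed.

Lemma row_tr_sub_span_mx j S : j \in S -> (row j B^T <= span S)%MS.
Proof. by move=> jS; apply: (sumsmx_sup j) => //; rewrite genmxE. Qed.

Lemma proj_mxSl S S' : S \subset S' -> P S *m P S' = P S.
Proof.
by move=> SS'; rewrite proj_mx_id // (submx_trans (proj_mx_sub S)) // span_mxS.
Qed.

Lemma proj_mxSr S S' : S \subset S' -> P S' *m P S = P S.
Proof.
by move=> SS'; rewrite -[LHS]trmxK trmx_mul !proj_mx_sym proj_mxSl // proj_mx_sym.
Qed.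

End Projection.

Section Objective.
Variables (R : rcfType) (m nA nB : nat) (A : 'M[R]_(m, nA)) (B : 'M[R]_(m, nB)).
Local Notation P := (Defs.proj_mx B).
Local Notation f := (fA A B).
Implicit Types S O : {set 'I_nB}.

Lemma fA_trE S : f S = \tr (P S *m (A *m A^T)).
Proof. by rewrite /fA frob2_projE ?proj_mx_sym ?proj_mx_idem. Qed.

Lemma fA_ge0 S : 0 <= f S.
Proof. exact: frob2_ge0. Qed.

Lemma fA_subE S S' : S \subset S' -> f S' - f S = frob2 ((P S' - P S) *m A).
Proof.
move=> SS'; rewrite frob2_projE ?mulmxBl ?linearB /= -?fA_trE ?proj_mx_sym //.
by rewrite !proj_mx_idem (proj_mxSl B SS') (proj_mxSr B SS') subrr addr0.
Qed.

Lemma fA_monotone S S' : S \subset S' -> f S <= f S'.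
Proof. by move=> SS'; rewrite -subr_ge0 fA_subE // frob2_ge0. Qed.

Lemma fA_gain S S' (u : 'rV[R]_m) :
  S \subset S' -> (u <= span_mx B S')%MS -> frob2 u <= 1 ->
  frob2 (u *m (1%:M - P S) *m A) <= f S' - f S.
Proof.
move=> SS' uS' u_le1; rewrite fA_subE //; set u' := u *m (1%:M - P S).
have u'Q : u' *m (P S' - P S) = u'.
  rewrite /u' -mulmxA mulmxBl mul1mx !mulmxBr proj_mx_idem (proj_mxSl B SS').
  by rewrite subrr subr0 mulmx1 (proj_mx_id uS').
have u'_le1 : frob2 u' <= 1.
  rewrite (le_trans _ u_le1) // -frob2_trmx -[frob2 u]frob2_trmx trmx_mul.
  by rewrite compl_proj_sym ?frob2_proj_le ?compl_proj_sym ?compl_proj_idem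
    ?proj_mx_sym ?proj_mx_idem.
rewrite -u'Q -mulmxA (le_trans (frob2_row_mul_le _ _)) //.
by rewrite ler_piMl ?frob2_ge0.
Qed.

Lemma fA_compl_le S O :
  3%:R * f O <= 12%:R * frob2 (P O *m ((1%:M - P S) *m A)) + 4%:R * f S.
Proof.
rewrite /fA; have -> : P O *m A = P O *m ((1%:M - P S) *m A) + P O *m (P S *m A).
  by rewrite -mulmxDr mulmxBl mul1mx subrK.
apply: (le_trans (frob2_add_le _ _)); rewrite lerD2l ler_wpM2l ?ler0n //.
by rewrite frob2_proj_le ?proj_mx_sym ?proj_mx_idem.
Qed.

End Objective.

Local Open Scope sesquilinear_scope.

Section Spectral.
Variable C : numClosedFieldType.

Lemma spectral_diag_eigenvalue n (M : 'M[C]_n) j :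
  M \is normalmx -> eigenvalue M (spectral_diag M 0 j).
Proof.
move=> /orthomx_spectralP; set P := spectralmx M; set d := spectral_diag M.
rewrite invmx_unitary ?spectral_unitarymx // => M_eq.
have PPt : P *m P^t* = 1%:M by apply/unitarymxP/spectral_unitarymx.
apply/eigenvalueP; exists (row j P).
  rewrite M_eq !mulmxA -!row_mul PPt mul1mx row_mul row_diag_mx.
  by rewrite -scalemxAl -rowE.
apply/negP => /eqP Pj0; have := congr1 (fun v : 'rV_n => v 0 j) (row_mul j P (P^t*)).
by rewrite Pj0 mul0mx PPt !mxE eqxx /= => /eqP; rewrite oner_eq0.
Qed.

Lemma normal_form_ge n (M : 'M[C]_n) (s : C) :
  M \is normalmx -> (forall j, s <= spectral_diag M 0 j) ->
  forall v : 'rV_n, s * (v *m v^t*) 0 0 <= (v *m M *m v^t*) 0 0.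
Proof.
move=> /orthomx_spectralP; set P := spectralmx M; set d := spectral_diag M.
have P_unitary : P \is unitarymx := spectral_unitarymx M.
rewrite invmx_unitary // => M_eq s_le v; set w := v *m P^t*.
have PtP : P^t* *m P = 1%:M by rewrite -invmx_unitary // mulVmx ?spectral_unit.
have wt : w^t* = P *m v^t* by rewrite trmx_mul map_mxM trmxCK.
have -> : v *m v^t* = w *m w^t* by rewrite wt mulmxA -(mulmxA v) PtP mulmx1.
have -> : v *m M *m v^t* = w *m diag_mx d *m w^t* by rewrite wt M_eq !mulmxA.
rewrite mul_mx_diag !mxE mulr_sumr; apply: ler_sum => j _.
rewrite !mxE mulrAC [leRHS]mulrC -subr_ge0 -mulrBl.
by rewrite mulr_ge0 ?mul_conjC_ge0 // subr_ge0.
Qed.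

End Spectral.

Section RealSymmetric.
Variable R : rcfType.
Local Notation toC := (real_complex R).

Lemma symmetric_form_ge n (G : 'M[R]_n) (s : R) :
  G^T = G -> (forall a, eigenvalue G a -> s <= a) ->
  forall v : 'rV_n, s * frob2 v <= (v *m G *m v^T) 0 0.
Proof.
move=> G_sym s_le v.
have conj_toC p q (M : 'M[R]_(p, q)) : (map_mx toC M)^t* = map_mx toC M^T.
  by apply/matrixP => i j; rewrite !mxE conj_Creal // complex_real.
have toC00 (M : 'M[R]_1) : toC (M 0 0) = map_mx toC M 0 0 by rewrite mxE.
set Gc := map_mx toC G.
have Gc_herm : Gc \is hermsymmx.
  by apply/is_hermitianmxP; rewrite expr0 scale1r conj_toC G_sym.
(* The spectrum of the hermitian [Gc] is real, so it consists of eigenvalues of [G]. *)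
have d_ge j : toC s <= spectral_diag Gc 0 j.
  have /complex_realP [r d_r] := mxOverP (hermitian_spectral_diag_real Gc_herm) 0 j.
  rewrite d_r lecR s_le // -(eigenvalue_map toC).
  suff : eigenvalue Gc (spectral_diag Gc 0 j) by rewrite d_r.
  exact/spectral_diag_eigenvalue/hermitian_normalmx.
rewrite -lecR frob2_rowE rmorphM /= !toC00 !map_mxM -!conj_toC.
exact: normal_form_ge (hermitian_normalmx Gc_herm) d_ge _.
Qed.

End RealSymmetric.

Section UnitColumns.
Variables (R : rcfType) (m nB : nat) (B : 'M[R]_(m, nB)).
Hypothesis B_col_neq0 : forall j, col j B != 0.
Implicit Types S O : {set 'I_nB}.

Definition unit_col j : 'rV[R]_m := (col_norm B j)^-1 *: row j B^T.

Lemma col_norm_gt0 j : 0 < col_norm B j.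
Proof.
rewrite sqrtr_gt0 lt_def sumr_ge0 ?andbT => [|i _]; last by rewrite sqr_ge0.
rewrite psumr_eq0 => [|i _]; last by rewrite sqr_ge0.
apply: contra (B_col_neq0 j) => /allP B_j0; apply/eqP/matrixP => i k.
by rewrite ord1 !mxE; apply/eqP; rewrite -sqrf_eq0; apply: B_j0; rewrite mem_index_enum.
Qed.

Lemma unit_col_dot j k : (unit_col j *m (unit_col k)^T) 0 0 =
  (\sum_i B i j * B i k) / (col_norm B j * col_norm B k).
Proof.
rewrite !mxE mulr_suml; apply: eq_bigr => i _.
by rewrite !mxE invfM; ring.
Qed.

Lemma frob2_unit_col j : frob2 (unit_col j) = 1.
Proof.
have := col_norm_gt0 j; rewrite frob2_rowE unit_col_dot -[col_norm B j * _]expr2.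
rewrite /col_norm sqrtr_gt0 => norm_gt0; rewrite sqr_sqrtr ?ltW //.
by under eq_bigr do rewrite -expr2; rewrite divff // gt_eqF.
Qed.

Lemma unit_col_sub_span j S : j \in S -> (unit_col j <= span_mx B S)%MS.
Proof. by move=> jS; rewrite scalemx_sub // row_tr_sub_span_mx. Qed.

Lemma span_mx_unit_colsP S w : (w <= span_mx B S)%MS ->
  exists2 c : 'I_nB -> R,
    (forall x, x \notin S -> c x = 0) & w = \sum_x c x *: unit_col x.
Proof.
move=> /sub_sumsmxP [u_ ->].
have coef j : exists a, u_ j *m <<row j B^T>>%MS = a *: unit_col j.
  apply/sub_rVP; rewrite (eqmx_scale _ (invr_neq0 (lt0r_neq0 (col_norm_gt0 j)))).
  by rewrite -(genmxE (row j B^T)) submxMl.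
have [a a_eq] := fin_all_exists coef.
exists (fun x => if x \in S then a x else 0) => [x /negbTE -> //|].
by rewrite big_mkcond; apply: eq_bigr => x _; case: ifP; rewrite ?a_eq ?scale0r.
Qed.

Definition unit_cols_mx S : 'M[R]_(#|S|, m) :=
  \matrix_(k, i) unit_col (enum_val k) 0 i.

Lemma gram_unitE S : gram_unit B S = unit_cols_mx S *m (unit_cols_mx S)^T.
Proof.
apply/matrixP => k l; rewrite /gram_unit mxE -unit_col_dot !mxE.
by apply: eq_bigr => i _; rewrite !mxE.
Qed.

Lemma riesz_lower_bound OPT s :
  (forall a, eigenvalue (gram_unit B OPT) a -> s <= a) ->
  forall c : 'I_nB -> R, (forall x, x \notin OPT -> c x = 0) ->
  s * \sum_x c x ^+ 2 <= frob2 (\sum_x c x *: unit_col x).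
Proof.
move=> s_le c c0; pose v : 'rV_#|OPT| := \row_k c (enum_val k).
have vY : v *m unit_cols_mx OPT = \sum_x c x *: unit_col x.
  apply/rowP => i; rewrite summxE !mxE (sumr_supp (S := OPT)) => [|x /c0 ->];
    last by rewrite mxE mul0r.
  by rewrite [RHS]big_enum_val; apply: eq_bigr => k _; rewrite !mxE.
have vv : frob2 v = \sum_x c x ^+ 2.
  rewrite /frob2 big_ord1 (sumr_supp (S := OPT)) => [|x /c0 ->]; last by rewrite expr0n.
  by rewrite [RHS]big_enum_val; apply: eq_bigr => k _; rewrite mxE.
rewrite -vv -vY [frob2 (_ *m _)]frob2_rowE trmx_mul mulmxA -(mulmxA v) -gram_unitE.
have G_sym : (gram_unit B OPT)^T = gram_unit B OPT by rewrite gram_unitE trmx_mul trmxK.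
exact: (symmetric_form_ge G_sym s_le).
Qed.

Lemma frame_lower_bound OPT O s :
  (forall a, eigenvalue (gram_unit B OPT) a -> s <= a) -> 0 < s ->
  O \subset OPT -> forall w : 'rV_m, (w <= span_mx B O)%MS ->
  s * frob2 w <= \sum_(x in O) ((unit_col x *m w^T) 0 0) ^+ 2.
Proof.
move=> s_le s_gt0 OOPT w /span_mx_unit_colsP [c c0 w_eq].
set g := fun x => (unit_col x *m w^T) 0 0.
have riesz : s * \sum_x c x ^+ 2 <= frob2 w.
  rewrite w_eq; apply: (riesz_lower_bound s_le) => x xOPT.
  exact/c0/(contra (subsetP OOPT x)).
have ww : frob2 w = \sum_x c x * g x.
  rewrite frob2_rowE {1}w_eq mulmx_suml summxE.
  by apply: eq_bigr => x _; rewrite -scalemxAl mxE.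
(* AM-GM termwise, [2 s c g <= s^2 c^2 + g^2]; as [c] vanishes outside [O],
   the [g^2] terms are only needed on [O]. *)
have amgm : 2 * s * frob2 w <= s ^+ 2 * \sum_x c x ^+ 2 + \sum_(x in O) g x ^+ 2.
  rewrite ww [X in _ <= _ + X]big_mkcond !mulr_sumr -big_split /=.
  apply: ler_sum => x _; have := sqr_ge0 (s * c x - g x).
  by case: ifPn => [_|/c0 ->]; nra.
have : s ^+ 2 * \sum_x c x ^+ 2 <= s * frob2 w.
  by rewrite expr2 -mulrA ler_wpM2l // ltW.
lra.
Qed.

Lemma frame_lower_bound_mx OPT O s q (M : 'M[R]_(m, q)) :
  (forall a, eigenvalue (gram_unit B OPT) a -> s <= a) -> 0 < s ->
  O \subset OPT ->
  s * frob2 (Defs.proj_mx B O *m M) <= \sum_(x in O) frob2 (unit_col x *m M).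
Proof.
move=> s_le s_gt0 OOPT; set W := Defs.proj_mx B O *m M.
have -> : \sum_(x in O) frob2 (unit_col x *m M) =
          \sum_j \sum_(x in O) ((unit_col x *m W) 0 j) ^+ 2.
  rewrite [RHS]exchange_big /=; apply: eq_bigr => x xO.
  by rewrite /frob2 big_ord1 /W mulmxA proj_mx_id // unit_col_sub_span.
rewrite -frob2_trmx frob2_rows mulr_sumr; apply: ler_sum => j _.
have W_jO : (row j W^T <= span_mx B O)%MS.
  rewrite /W trmx_mul proj_mx_sym row_mul.
  exact: submx_trans (submxMl _ _) (proj_mx_sub B O).
apply: le_trans (frame_lower_bound s_le s_gt0 OOPT W_jO) _.
have entry x : (unit_col x *m (row j W^T)^T) 0 0 = (unit_col x *m W) 0 j.
  by rewrite !mxE; apply: eq_bigr => i _; rewrite !mxE.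
by under eq_bigr do rewrite entry.
Qed.

End UnitColumns.

Lemma greedy_step_bound (R : rcfType) m nA nB (A : 'M[R]_(m, nA))
    (B : 'M[R]_(m, nB)) (OPT O S : {set 'I_nB}) (s g' : R) :
  (forall j, col j B != 0) ->
  (forall a, eigenvalue (gram_unit B OPT) a -> s <= a) -> 0 < s ->
  O \subset OPT -> (forall x, x \in O -> fA A B (x |: S) <= g') ->
  s * (3%:R * fA A B O - 4%:R * fA A B S) <= 12%:R * #|O|%:R * (g' - fA A B S).
Proof.
move=> B_neq0 s_le s_gt0 OOPT gain; set M := (1%:M - Defs.proj_mx B S) *m A.
have gain_x x : x \in O -> frob2 (unit_col B x *m M) <= g' - fA A B S.
  move=> xO; rewrite mulmxA; apply: le_trans (fA_gain A (subsetUr [set x] S) _ _) _.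
  - exact: unit_col_sub_span (setU11 x S).
  - by rewrite frob2_unit_col.
  - by rewrite lerD2r gain.
have sum_gain : \sum_(x in O) frob2 (unit_col B x *m M) <= #|O|%:R * (g' - fA A B S).
  by rewrite mulr_natl -sumr_const; apply: ler_sum.
have := frame_lower_bound_mx B_neq0 M s_le s_gt0 OOPT.
have := fA_compl_le A B S O; have := frob2_ge0 (Defs.proj_mx B O *m M).
nra.
Qed.

Section Greedy.
Variables (R : rcfType) (m nA nB : nat) (A : 'M[R]_(m, nA)) (B : 'M[R]_(m, nB)).
Variable pr : 'I_nB -> nat.
Hypothesis pr_inj : injective pr.
Implicit Types C S T : {set 'I_nB}.
Local Notation f := (fA A B).
Local Notation cands := (greedy_cands A B).
Local Notation step := (greedy_step pr A B).

Lemma greedy_step_sub C S : S \subset step C S.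
Proof. by rewrite /greedy_step; case: pickP => [c _|_] //; apply: subsetUr. Qed.

Lemma greedy_iter_sub C j j' : (j <= j')%N ->
  iter j (step C) set0 \subset iter j' (step C) set0.
Proof.
move=> /subnK <-; elim: (j' - j)%N => [|d IH] //=.
exact: subset_trans IH (greedy_step_sub _ _).
Qed.

Lemma greedy_notin_iter C x K j : x \notin greedy pr A B C K -> (j <= K)%N ->
  x \notin iter j (step C) set0.
Proof. by move=> xK jK; apply: contra xK; apply/subsetP/greedy_iter_sub. Qed.

Lemma greedy_stepE C S c : c \in cands C S ->
  (forall d, d \in cands C S -> (pr c <= pr d)%N) -> step C S = c |: S.
Proof.
move=> c_cand c_least; rewrite /greedy_step; case: pickP => [c' | /(_ c)].
  case/andP => c'_cand /forall_inP c'_least; congr (_ |: S).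
  by apply: pr_inj; apply/eqP; rewrite eqn_leq c'_least // c_least.
by rewrite c_cand => /negbT/negP[]; apply/forall_inP.
Qed.

Lemma greedy_cands_least C S x : x \in C :\: S ->
  exists2 c, c \in cands C S & forall d, d \in cands C S -> (pr c <= pr d)%N.
Proof.
move=> xCS; have [c0 c0CS c0_max] := arg_maxP (fun c => f (c |: S)) xCS.
have c0_cand : c0 \in cands C S.
  rewrite in_set; apply/andP; split; first exact: c0CS.
  by apply/forall_inP => d dCS; apply: c0_max.
by have [c c_cand c_least] := arg_minnP pr c0_cand; exists c.
Qed.

Lemma greedy_cands_setU1 T S x c : c \in cands (x |: T) S -> c != x ->
  c \in cands T S /\ cands T S \subset cands (x |: T) S.
Proof.
rewrite in_set => /andP [cxTS /forall_inP c_max] cx.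
have TxT : T :\: S \subset (x |: T) :\: S by apply/setSD/subsetUr.
have cTS : c \in T :\: S by move: cxTS; rewrite !inE (negbTE cx).
split; first by rewrite in_set cTS; apply/forall_inP => d /(subsetP TxT); apply: c_max.
apply/subsetP => d; rewrite in_set => /andP [dTS /forall_inP d_max].
rewrite in_set (subsetP TxT) //=; apply/forall_inP => e.
case: (eqVneq e x) => [-> xTS | ex eTS]; first exact: le_trans (c_max x xTS) (d_max c cTS).
by apply: d_max; move: eTS; rewrite !inE (negbTE ex).
Qed.

Lemma greedy_step_setU1 T S x : x \notin S -> x \notin step (x |: T) S ->
  step (x |: T) S = step T S /\ f (x |: S) <= f (step T S).
Proof.
move=> xS; have xxTS : x \in (x |: T) :\: S by rewrite inE xS setU11.
have [c c_cand c_least] := greedy_cands_least xxTS.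
rewrite (greedy_stepE c_cand c_least) in_setU1 negb_or eq_sym => /andP [cx _].
have [cT candsT] := greedy_cands_setU1 c_cand cx.
rewrite (greedy_stepE cT) => [|d /(subsetP candsT)]; last exact: c_least.
by split => //; move: c_cand; rewrite in_set => /andP [_ /forall_inP]; apply.
Qed.

Lemma greedy_iter_setU1 T x K : x \notin greedy pr A B (x |: T) K ->
  forall j, (j <= K)%N -> iter j (step (x |: T)) set0 = iter j (step T) set0.
Proof.
move=> xK; elim=> [|j IH] jK; first by [].
have jK' := ltnW jK; rewrite !iterS IH; last exact: jK'.
have xS : x \notin iter j (step T) set0.
  by rewrite -IH; [exact: greedy_notin_iter xK jK' | exact: jK'].
have xS' : x \notin step (x |: T) (iter j (step T) set0).
  by rewrite -IH -?iterS; [exact: greedy_notin_iter xK jK | exact: jK'].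
by have [] := greedy_step_setU1 xS xS'.
Qed.

Lemma greedy_gain_le T x K : x \notin greedy pr A B (x |: T) K ->
  forall j, (j < K)%N -> f (x |: iter j (step T) set0) <= f (iter j.+1 (step T) set0).
Proof.
move=> xK j jK; have jK' := ltnW jK.
have xS : x \notin iter j (step T) set0.
  by rewrite -(greedy_iter_setU1 xK jK'); exact: greedy_notin_iter xK jK'.
have xS' : x \notin step (x |: T) (iter j (step T) set0).
  by rewrite -(greedy_iter_setU1 xK jK') -iterS; exact: greedy_notin_iter xK jK.
by have [_ gain] := greedy_step_setU1 xS xS'; rewrite iterS.
Qed.

End Greedy.

Lemma greedy_recurrence (R : realFieldType) (g : nat -> R) (F s c : R) (K : nat) :
  0 < s -> 0 < c -> (forall j, 0 <= g j) -> (forall j, g j <= g j.+1) ->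
  (forall j, (j < K)%N -> s * (3%:R * F - 4%:R * g j) <= 12%:R * c * (g j.+1 - g j)) ->
  32%:R * c <= K%:R * s -> F <= 2%:R * g K.
Proof.
move=> s_gt0 c_gt0 g_ge0 g_mono g_step cK.
have inv j : (j <= K)%N -> F <= 2%:R * g j \/ j%:R * s * F <= 12%:R * c * g j.
  elim: j => [|j IH] jK; first by right; have := g_ge0 0%N; nra.
  have := g_step j jK; have := g_mono j; have := g_ge0 j.
  case: (IH (ltnW jK)) => [low | high]; first by left; lra.
  have [low | high'] := lerP F (2%:R * g j); first by left; lra.
  right; rewrite -natr1.
  have : s * F <= s * (3%:R * F - 4%:R * g j) by rewrite ler_wpM2l ?ltW //; lra.
  nra.
case: (inv K (leqnn K)) => // high; have [F_lt0 | F_ge0] := ltrP F 0.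
  by have := g_ge0 K; lra.
have : 32%:R * c * F <= K%:R * s * F by rewrite ler_wpM2r.
nra.
Qed.

Unset Implicit Arguments.
Set Strict Implicit.

Theorem lemma3 (R : rcfType) (m nA nB : nat)
  (A : 'M[R]_(m, nA)) (B : 'M[R]_(m, nB))
  (pr : 'I_nB -> nat) (pr_inj : injective pr)
  (hA : forall j, col j A != 0) (hB : forall j, col j B != 0)
  (k : nat) (OPT : {set 'I_nB})
  (hOPTk : #|OPT| = k)
  (hOPTmax : forall S : {set 'I_nB}, #|S| = k -> fA A B S <= fA A B OPT)
  (s : R) (hs : is_sigma_min B OPT s) (hspos : 0 < s)
  (l : nat) (T : 'I_l -> {set 'I_nB})
  (hTdisj : forall i j, i != j -> [disjoint T i & T j])
  (hTcov : \bigcup_(i < l) T i = [set: 'I_nB])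
  (k' : nat)
  (hk'1 : 32%:R * k%:R / s <= k'%:R) (hk'2 : k'%:R < 32%:R * k%:R / s + 1)
  (i : 'I_l) :
  let S_i := greedy pr A B (T i) k' in
  let OPT_NS := [set x in OPT | x \notin greedy pr A B (x |: T i) k'] in
  fA A B S_i >= fA A B OPT_NS / 2%:R.
Proof.
cbv zeta; set S_i := greedy _ _ _ _ _; set O := [set x in OPT | _].
pose g j := fA A B (iter j (greedy_step pr A B (T i)) set0).
have O_sub : O \subset OPT by apply/subsetP => x; rewrite inE => /andP [].
have [O0 | [x0 x0O]] := set_0Vmem O.
  by have := fA_monotone A B (sub0set S_i); have := fA_ge0 A B set0; rewrite O0; lra.
have O_gt0 : 0 < #|O|%:R :> R by rewrite ltr0n; apply/card_gt0P; exists x0.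
suff : fA A B O <= 2%:R * g k' by rewrite /S_i /greedy -/(g k'); lra.
apply: (greedy_recurrence hspos O_gt0) => [j | j | j jk' | ].
- exact: fA_ge0.
- exact/fA_monotone/greedy_step_sub.
- apply: (greedy_step_bound (A := A) hB hs.2 hspos O_sub) => x.
  by rewrite inE => /andP [_ xK]; apply: (greedy_gain_le pr_inj xK jk').
- have : #|O|%:R <= k%:R :> R by rewrite ler_nat -hOPTk subset_leq_card.
  by rewrite ler_pdivrMr // in hk'1; lra.
Qed.
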